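(* A GNS $S\subseteq\mathbb{N}^d$ is quasi-irreducible if and only if for every $P\in PF(S)$, either $P\in FA(S)$ or $2P\in FA(S)$.
   Context: $\mathbb{N}=\{0,1,2,\dots\}$. A GNS is a submonoid $S\subseteq\mathbb{N}^d$ with finite complement $\mathcal{H}(S)=\mathbb{N}^d\setminus S$ (gaps). A relaxed monomial order is a total order $\prec$ on $\mathbb{N}^d$ with (i) $v\prec w\Rightarrow v\prec w+u$ for all $u\in\mathbb{N}^d$, (ii) $0\prec v$ for all $v\neq0$. A gap is Frobenius allowable if it equals $\max_\prec\mathcal{H}(S)$ for some relaxed monomial order; $FA(S)$ is the set of these. A gap $P$ is pseudo-Frobenius if $P+s\in S$ for all nonzero $s\in S$; $PF(S)$ is the set of these. $S$ is quasi-irreducible if for every $x\in\mathcal{H}(S)$, either $2x\in FA(S)$ or there is $F\in FA(S)$ with $F-x\in S$. *)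

From mathcomp Require Import all_boot.
Set Implicit Arguments. Unset Strict Implicit. Unset Printing Implicit Defensive.

Definition vec (d : nat) := {ffun 'I_d -> nat}.

Definition vzero (d : nat) : vec d := [ffun _ => 0].
Definition vadd (d : nat) (u v : vec d) : vec d := [ffun i => u i + v i].

Definition is_GNS (d : nat) (S : vec d -> Prop) : Prop :=
  [/\ S (vzero d),
      (forall u v, S u -> S v -> S (vadd u v)) &
      exists gaps : seq (vec d), forall x, ~ S x -> x \in gaps].

Definition is_gap (d : nat) (S : vec d -> Prop) (x : vec d) : Prop := ~ S x.

Definition relaxed_monomial_order (d : nat) (lt : vec d -> vec d -> Prop) : Prop :=
  [/\ (forall v, ~ lt v v),
      (forall u v w, lt u v -> lt v w -> lt u w),
      (forall v w, v <> w -> lt v w \/ lt w v),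
      (forall v w u, lt v w -> lt v (vadd w u)) &
      (forall v, v <> vzero d -> lt (vzero d) v)].

Definition is_max_gap (d : nat) (lt : vec d -> vec d -> Prop)
    (S : vec d -> Prop) (F : vec d) : Prop :=
  is_gap S F /\ forall x, is_gap S x -> x <> F -> lt x F.

Definition frobenius_allowable (d : nat) (S : vec d -> Prop) (F : vec d) : Prop :=
  exists lt : vec d -> vec d -> Prop,
    relaxed_monomial_order lt /\ is_max_gap lt S F.

Definition pseudo_frobenius (d : nat) (S : vec d -> Prop) (P : vec d) : Prop :=
  is_gap S P /\ forall s, S s -> s <> vzero d -> S (vadd P s).

(* quasi-irreducible; "F - x ∈ S" (in N^d) is rendered as F = x + s with s ∈ S *)
Definition quasi_irreducible (d : nat) (S : vec d -> Prop) : Prop :=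
  forall x, is_gap S x ->
    frobenius_allowable S (vadd x x) \/
    exists F, frobenius_allowable S F /\ exists s, S s /\ F = vadd x s.

(* Two facts about a GNS drive the proof.
   (1) Every gap x lies below a pseudo-Frobenius element: P = x + s with
       s ∈ S.  Among the gaps of the form x + s, take one of maximal total
       weight; adding a nonzero element of S strictly increases the weight,
       so it can only land in S.  Such a maximum exists because gaps are
       finitely many, hence of bounded weight.
   (2) A Frobenius allowable element is a gap, so if P is pseudo-Frobenius
       and P + s ∈ FA(S) with s ∈ S, then s = 0.
   (⇒) For P ∈ PF(S), quasi-irreducibility gives 2P ∈ FA(S) or some
       F = P + s ∈ FA(S); by (2) F = P.
   (⇐) For a gap x, take P = x + s as in (1).  If P ∈ FA(S) it is the
       required F.  If 2P ∈ FA(S), either s = 0 and 2x = 2P, or s ≠ 0 and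
       2P = x + (P + s) with P + s ∈ S. *)

From mathcomp Require Import all_boot.
From Stdlib Require Import Classical.
From mathcomp Require Import zify.

Set Implicit Arguments. Unset Strict Implicit. Unset Printing Implicit Defensive.

Lemma vaddA d (a b c : vec d) : vadd (vadd a b) c = vadd a (vadd b c).
Proof. by apply/ffunP=> i; rewrite !ffunE addnA. Qed.

Lemma vaddC d (a b : vec d) : vadd a b = vadd b a.
Proof. by apply/ffunP=> i; rewrite !ffunE addnC. Qed.

Lemma vadd0 d (a : vec d) : vadd a (vzero d) = a.
Proof. by apply/ffunP=> i; rewrite !ffunE addn0. Qed.

Definition weight (d : nat) (y : vec d) : nat := \sum_(i < d) y i.

Lemma weight_add d (a b : vec d) : weight (vadd a b) = weight a + weight b.
Proof. by rewrite /weight -big_split; apply: eq_bigr => i _; rewrite ffunE. Qed.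

Lemma weight_pos d (s : vec d) : s <> vzero d -> 0 < weight s.
Proof.
move=> s_neq0; rewrite lt0n; apply/negP => /eqP ws0; apply: s_neq0.
apply/ffunP => i; rewrite ffunE; apply/eqP; rewrite -leqn0 -ws0.
by rewrite /weight (bigD1 i) //= leq_addr.
Qed.

(* A nonempty property whose witnesses have bounded measure has a witness of
   maximal measure (classically: climb while a larger witness exists). *)
Lemma exists_max_measure (T : Type) (f : T -> nat) (Q : T -> Prop) (B : nat) :
  (forall y, Q y -> f y <= B) -> forall x, Q x ->
  exists y, Q y /\ forall z, Q z -> f z <= f y.
Proof.
move=> bounded x Qx; move: {2}(B - f x) (leqnn (B - f x)) => k.
elim: k x Qx => [|k IH] x Qx hk.
  exists x; split=> // z Qz; have := bounded z Qz; lia.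
case: (classic (exists z, Q z /\ f x < f z)) => [[z [Qz lt_xz]]|no_bigger].
  by apply: (IH z Qz); have := bounded z Qz; lia.
exists x; split=> // z Qz; rewrite leqNgt; apply/negP => lt_xz.
by apply: no_bigger; exists z.
Qed.

Lemma gap_weight_bounded d (S : vec d -> Prop) :
  is_GNS S -> exists B, forall y, is_gap S y -> weight y <= B.
Proof.
move=> [_ _ [gaps in_gaps]]; exists (\max_(g <- gaps) weight g) => y gap_y.
exact: (leq_bigmax_seq _ (in_gaps y gap_y)).
Qed.

Lemma gap_below_pseudo_frobenius d (S : vec d -> Prop) (x : vec d) :
  is_GNS S -> is_gap S x ->
  exists P, pseudo_frobenius S P /\ exists s, S s /\ P = vadd x s.
Proof.
move=> GNS gap_x; have [S0 Sadd _] := GNS.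
have [B bounded] := gap_weight_bounded GNS.
pose above_x y := is_gap S y /\ exists s, S s /\ y = vadd x s.
have [|P [[gap_P [s [Ss eP]]] maxP]] :=
  @exists_max_measure _ (@weight d) above_x B (fun y hy => bounded y hy.1) x.
  by split=> //; exists (vzero d); rewrite vadd0.
exists P; split; last by exists s.
split=> // t St t_neq0; apply: NNPP => gap_Pt.
have : above_x (vadd P t).
  by split=> //; exists (vadd s t); split; [exact: Sadd | rewrite eP vaddA].
move/maxP; rewrite weight_add; have := weight_pos t_neq0; lia.
Qed.

Lemma frobenius_allowable_gap d (S : vec d -> Prop) (F : vec d) :
  frobenius_allowable S F -> is_gap S F.
Proof. by case=> lt [_ []]. Qed.

Lemma pseudo_frobenius_FA_above d (S : vec d -> Prop) (P s : vec d) :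
  pseudo_frobenius S P -> S s -> frobenius_allowable S (vadd P s) ->
  s = vzero d.
Proof.
move=> [_ PF_P] Ss /frobenius_allowable_gap gap_Ps.
by apply: NNPP => s_neq0; apply: gap_Ps; exact: PF_P.
Qed.

Theorem proposition3p3 (d : nat) (S : vec d -> Prop) :
  is_GNS S ->
  (quasi_irreducible S <->
   forall P, pseudo_frobenius S P ->
     frobenius_allowable S P \/ frobenius_allowable S (vadd P P)).
Proof.
move=> GNS; split.
- move=> qirr P PF_P; case: (qirr P PF_P.1) => [FA_2P|[F [FA_F [s [Ss eF]]]]].
    by right.
  left; rewrite eF in FA_F.
  by rewrite -[P]vadd0 -(pseudo_frobenius_FA_above PF_P Ss FA_F).
- move=> PF_FA x gap_x.
  have [P [PF_P [s [Ss eP]]]] := gap_below_pseudo_frobenius GNS gap_x.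
  case: (PF_FA P PF_P) => [FA_P|FA_2P].
    by right; exists P; split=> //; exists s.
  case: (classic (s = vzero d)) => [s0|s_neq0].
    by left; rewrite eP s0 vadd0 in FA_2P.
  right; exists (vadd P P); split=> //; exists (vadd P s); split.
    exact: PF_P.2.
  by rewrite {1}eP vaddA (vaddC s P).
Qed.
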